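(* Let $L$ be a minimal Koszul $L_\infty$-algebra and let $W=L^{(1)}$ be its weight one part. Then the canonical strict morphism of $L_\infty$-algebras $\mathbb{L}_\infty(W)\to L$ (extending the inclusion $W\subseteq L$) is surjective; that is, $L$ is generated in weight $1$.
   Context: Over $\mathbb Q$. An $L_\infty$-algebra $L$ (operations $l_n$ of degree $n-2$) is Koszul if it is equipped with a weight grading $L=\bigoplus_{w\ge1}L^{(w)}$ such that each $l_n$ is homogeneous of weight $2-n$ and the cochain complex $C^{CE}_*(L)^{(0)}\xrightarrow{b}C^{CE}_*(L)^{(1)}\xrightarrow{b}\cdots$ is exact, where $C^{CE}_*(L)=(\Lambda^c(sL),d+b)$ is the Chevalley–Eilenberg complex (cofree cocommutative coalgebra on $sL$ with the coderivation encoding the $l_n$), weight graded by letting $s$ have weight $-1$ (so $d+b$ raises weight by 1). $L$ is minimal if its differential is zero. $\mathbb{L}_\infty(W)$ denotes the free $L_\infty$-algebra on $W$; a strict morphism is one commuting with all operations. *)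

From HB Require Import structures.
From mathcomp Require Import all_boot all_order all_algebra.
Set Implicit Arguments. Unset Strict Implicit. Unset Printing Implicit Defensive.
Import Order.TTheory GRing.Theory Num.Theory.
Local Open Scope ring_scope.

Section Linf.
Variable V : lmodType rat.
(* hom d w x  <->  x lies in L_d^{(w)} (homological degree d, weight w). *)
Variable hom : int -> nat -> V -> Prop.
(* l xs = l_n(x_1,...,x_n) with n = size xs (only n >= 1 is ever used). *)
Variable l : seq V -> V.

(* A letter (d, w, x) is the element s x of sL, x in L_d^{(w)}. *)
Definition letter := (int * nat * V)%type.
Definition word := seq letter.          (* a monomial s x_1 ... s x_k *)
Definition fsum := seq (rat * word).

Definition ldeg (p : letter) : int := p.1.1.
Definition lwt (p : letter) : nat := p.1.2.
Definition lvec (p : letter) : V := p.2.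
Definition wf_letter (p : letter) : Prop := hom (ldeg p) (lwt p) (lvec p).
Definition wf_word (u : word) : Prop := forall p, p \in u -> wf_letter p.
Definition wf_fsum (c : fsum) : Prop := forall p, p \in c -> wf_word p.2.

(* L = (+)_{d in Z, w >= 1} L_d^{(w)} as bigraded Q-vector space. *)
Definition graded_space : Prop :=
  [/\ (forall d w, hom d w 0),
      (forall d w a x y, hom d w x -> hom d w y -> hom d w (a *: x + y)),
      (forall d x, hom d 0%N x -> x = 0),
      (forall x : V, exists s : word, wf_word s /\ x = \sum_(p <- s) lvec p)
    & (forall s : word, wf_word s -> uniq (map fst s) ->
         \sum_(p <- s) lvec p = 0 -> forall p, p \in s -> lvec p = 0)].

Definition out_letter (xs : word) : letter :=
  (\sum_(p <- xs) ldeg p + (size xs)%:Z - 2,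
   ((\sum_(p <- xs) lwt p)%N + 2 - size xs)%N,
   l (map lvec xs)).

(* l_n multilinear, graded antisymmetric, homogeneous of degree n-2, weight 2-n *)
Definition linfty_ops : Prop :=
  [/\ (forall u v a x y,
         l (u ++ (a *: x + y) :: v) = a *: l (u ++ x :: v) + l (u ++ y :: v)),
      (forall u v dx wx x dy wy y, hom dx wx x -> hom dy wy y ->
         l (u ++ x :: y :: v) = - ((-1) ^+ (absz dx * absz dy)) *: l (u ++ y :: x :: v))
    & (forall xs : word, (0 < size xs)%N -> wf_word xs -> wf_letter (out_letter xs))].

(* Koszul signs in sL (degree of s x is d + 1). *)
Definition sodd (p : letter) : bool := ~~ odd (absz (ldeg p)).
Definition ksign (p q : letter) : rat := if sodd p && sodd q then -1 else 1.

(* Koszul sign of the unshuffle selecting the letters marked true. *)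
Fixpoint usign (m : seq bool) (u : word) : rat :=
  match m, u with
  | b :: m', x :: u' =>
      (if b then 1 else \prod_(y <- mask m' u') ksign x y) * usign m' u'
  | _, _ => 1
  end.

(* decalage sign: q_n(sx_1,..,sx_n) = (-1)^(sum_i (n-i)|x_i|) s l_n(x_1,..,x_n) *)
Fixpoint dsign (xs : word) : rat :=
  match xs with
  | [::] => 1
  | x :: xs' => (if odd (size xs') && odd (absz (ldeg x)) then -1 else 1) * dsign xs'
  end.

Fixpoint masks (k : nat) : seq (seq bool) :=
  if k is k'.+1 then [seq b :: m | b <- [:: true; false], m <- masks k'] else [:: [::]].

(* The coderivation of Lambda^c(sL) extending the q_n for n >= nmin:
   Q(v_1...v_k) = sum_n sum_{unshuffles} eps q_n(v_s1..v_sn) v_s(n+1)...v_sk. *)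
Definition coder_word (nmin : nat) (u : word) : fsum :=
  [seq (usign m u * dsign (mask m u), out_letter (mask m u) :: mask (map negb m) u)
  | m <- masks (size u) & (nmin <= count id m)%N].

Definition scale_fs (a : rat) (c : fsum) : fsum := [seq (a * p.1, p.2) | p <- c].
Definition coder (nmin : nat) (c : fsum) : fsum :=
  flatten [seq scale_fs p.1 (coder_word nmin p.2) | p <- c].

(* Lambda^c(sL) = formal combinations of words modulo multilinearity and
   graded symmetry; inR c  <->  c represents 0 in Lambda^c(sL). *)
Definition coef (c : fsum) (u : word) : rat := \sum_(p <- c | p.2 == u) p.1.
Definition feq (c c' : fsum) : Prop := forall u, coef c u = coef c' u.

Definition basic_rel (r : fsum) : Prop :=
  (exists u v d w a x y, [/\ wf_word u, wf_word v, hom d w x, hom d w y &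
     r = [:: (1, u ++ (d, w, a *: x + y) :: v); (- a, u ++ (d, w, x) :: v);
             (-1, u ++ (d, w, y) :: v)]])
  \/ (exists u v p q, [/\ wf_word u, wf_word v, wf_letter p, wf_letter q &
     r = [:: (1, u ++ p :: q :: v); (- ksign p q, u ++ q :: p :: v)]]).

Definition inR (c : fsum) : Prop :=
  exists rs : seq (rat * fsum), (forall r, r \in rs -> basic_rel r.2) /\
    feq c (flatten [seq scale_fs r.1 r.2 | r <- rs]).

(* (L, l) is an L_infinity-algebra with weight grading: the coderivation
   d + b encoding all the l_n squares to zero on C^CE(L). *)
Definition Linfty_algebra : Prop :=
  [/\ graded_space, linfty_ops &
      forall u : word, wf_word u -> inR (coder 1 (coder 1 [:: (1, u)]))].

Definition minimal : Prop := forall x : V, l [:: x] = 0.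

(* weight of s x_1 ... s x_k: sum_i (w_i - 1)  (s has weight -1) *)
Definition word_weight (u : word) : int := \sum_(p <- u) ((lwt p)%:Z - 1).

(* Koszul: C^(0) -b-> C^(1) -b-> ... exact, i.e. exact at C^(i) for i >= 1,
   where b is the coderivation encoding the l_n, n >= 2. *)
Definition koszul : Prop :=
  forall i : int, 1 <= i -> forall c : fsum, wf_fsum c ->
    (forall p, p \in c -> word_weight p.2 = i) -> inR (coder 2 c) ->
    exists c' : fsum, [/\ wf_fsum c', (forall p, p \in c' -> word_weight p.2 = i - 1)
                        & inR (coder 2 c' ++ scale_fs (-1) c)].

(* L is generated in weight 1: the image of the canonical strict morphism
   L_oo(W) -> L, i.e. the smallest subspace containing W = L^(1) and closed
   under all l_n, is all of L. *)
Definition generated_in_weight_one : Prop :=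
  forall S : V -> Prop, S 0 -> (forall a x y, S x -> S y -> S (a *: x + y)) ->
    (forall d x, hom d 1%N x -> S x) ->
    (forall xs : seq V, (0 < size xs)%N -> (forall x, x \in xs -> S x) -> S (l xs)) ->
    forall x, S x.

End Linf.

From mathcomp Require Import all_boot all_order all_algebra zify.
Set Implicit Arguments. Unset Strict Implicit. Unset Printing Implicit Defensive.
Import Order.TTheory GRing.Theory Num.Theory.
Local Open Scope ring_scope.

(* Let u(c) be the linear functional on formal sums that keeps only the words of
   length one, sending the word (s x) to x; it vanishes on the relations of
   Lambda^c(sL), hence on everything that represents 0.  A homogeneous x of
   weight w >= 2 spans a cycle [s x] of C^CE(L)^(w-1) for b (b needs at least
   two letters), so by Koszulness [s x] = b c modulo relations, with c of
   weight w - 2.  Applying u gives x = sum of l_n(x_1, ..., x_n) over the words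
   s x_1 ... s x_n of c, and each x_i has weight < w unless some letter of the
   word has weight 0, in which case x_i = 0 and l_n vanishes. *)

Section UnaryPart.
Variable V : lmodType rat.

Definition unary_vec (u : word V) : V := if u is [:: p] then lvec p else 0.
Definition unary_part (c : fsum V) : V := \sum_(p <- c) p.1 *: unary_vec p.2.

Lemma unary_part_cat (c1 c2 : fsum V) :
  unary_part (c1 ++ c2) = unary_part c1 + unary_part c2.
Proof. by rewrite /unary_part big_cat. Qed.

Lemma unary_part_scale (a : rat) (c : fsum V) :
  unary_part (scale_fs a c) = a *: unary_part c.
Proof.
rewrite /unary_part /scale_fs big_map scaler_sumr.
by apply: eq_bigr => p _; rewrite scalerA.
Qed.

Lemma unary_part_coef (c : fsum V) (s : seq (word V)) :
  uniq s -> (forall p, p \in c -> p.2 \in s) ->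
  unary_part c = \sum_(u <- s) coef c u *: unary_vec u.
Proof.
move=> uniq_s; elim: c => [|p c IHc] c_s.
  by rewrite /unary_part big_nil big1 // => u _; rewrite /coef big_nil scale0r.
have coef_cons u : coef (p :: c) u = (if p.2 == u then p.1 else 0) + coef c u.
  by rewrite /coef big_cons; case: ifP; rewrite ?add0r.
rewrite /unary_part big_cons -/(unary_part c) IHc; last first.
  by move=> q qc; apply: c_s; rewrite in_cons qc orbT.
under [RHS]eq_bigr do rewrite coef_cons scalerDl.
rewrite big_split /=; congr (_ + _).
rewrite (bigD1_seq p.2) //=; last by apply: c_s; rewrite in_cons eqxx.
by rewrite eqxx big1 ?addr0 // => u; rewrite eq_sym => /negbTE ->; rewrite scale0r.
Qed.

Lemma unary_part_feq (c c' : fsum V) : feq c c' -> unary_part c = unary_part c'.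
Proof.
move=> eq_cc'; set s := undup (map snd (c ++ c')).
have uniq_s : uniq s by rewrite undup_uniq.
rewrite (unary_part_coef uniq_s) ?(unary_part_coef (c := c') uniq_s).
- by apply: eq_bigr => u _; rewrite eq_cc'.
- by move=> p pc; rewrite mem_undup map_f // mem_cat pc orbT.
- by move=> p pc; rewrite mem_undup map_f // mem_cat pc.
Qed.

Lemma unary_vec_cat (u v : word V) (p : letter V) :
  unary_vec (u ++ p :: v) = if (u == [::]) && (v == [::]) then lvec p else 0.
Proof. by case: u => [|a [|b u]]; case: v. Qed.

Lemma unary_vec_long (u v : word V) (p q : letter V) :
  unary_vec (u ++ p :: q :: v) = 0.
Proof. by case: u => [|a [|b u]]. Qed.

Lemma unary_part_basic_rel (hom : int -> nat -> V -> Prop) (r : fsum V) :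
  basic_rel hom r -> unary_part r = 0.
Proof.
rewrite /unary_part.
case=> [[u [v [d [w [a [x [y [_ _ _ _ ->]]]]]]]]|[u [v [p [q [_ _ _ _ ->]]]]]].
  rewrite !big_cons big_nil /= !unary_vec_cat /=.
  case: ifP => _; last by rewrite !scaler0 !addr0.
  by rewrite scale1r addr0 scaleNr scaleN1r -opprD subrr.
by rewrite !big_cons big_nil /= !unary_vec_long !scaler0 !addr0.
Qed.

Lemma unary_part_inR (hom : int -> nat -> V -> Prop) (c : fsum V) :
  inR hom c -> unary_part c = 0.
Proof.
case=> rs [rs_basic /unary_part_feq ->].
elim: rs rs_basic => [|r rs IHrs] rs_basic; first by rewrite /unary_part big_nil.
rewrite /= unary_part_cat unary_part_scale (unary_part_basic_rel (rs_basic r _)).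
  by rewrite scaler0 add0r IHrs // => r' r'rs; apply: rs_basic; rewrite in_cons r'rs orbT.
by rewrite in_cons eqxx.
Qed.

End UnaryPart.

Lemma word_weight_ge_letter (V : lmodType rat) (u : word V) (r : letter V) :
  all (fun q => 0 < lwt q)%N u -> r \in u -> (lwt r)%:Z - 1 <= word_weight u.
Proof.
move=> /allP u_pos ru; rewrite /word_weight (perm_big _ (perm_to_rem ru)) big_cons.
rewrite lerDl big_seq sumr_ge0 // => q /mem_rem /u_pos; rewrite subr_ge0.
by move=> q_pos; lia.
Qed.

Lemma mask_negb_nil (T : Type) (m : seq bool) (u : seq T) :
  size m = size u -> mask (map negb m) u = [::] -> mask m u = u.
Proof. by elim: m u => [|[] m IHm] [|x u] //= [] /IHm Hm /Hm ->. Qed.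

Lemma size_masks (k : nat) (m : seq bool) : m \in masks k -> size m = k.
Proof.
elim: k m => [|k IHk] m /=; first by rewrite inE => /eqP ->.
move=> mk; have [[b m'] /= [_ /IHk <- ->]] // :=
  @allpairsP _ _ _ cons [:: true; false] (masks k) m mk.
Qed.

Lemma mem_coder2 (V : lmodType rat) (l : seq V -> V) (c : fsum V) q :
  q \in coder l 2 c -> exists p m, [/\ p \in c, m \in masks (size p.2),
    (2 <= count id m)%N & q.2 = out_letter l (mask m p.2) :: mask (map negb m) p.2].
Proof.
case/flatten_mapP => p pc /mapP [r] /mapP [m].
by rewrite mem_filter => /andP [cm mm] -> ->; exists p, m.
Qed.

Section GeneratedInWeightOne.
Variables (V : lmodType rat) (hom : int -> nat -> V -> Prop) (l : seq V -> V).
Hypotheses (graded : graded_space hom) (ops : linfty_ops hom l).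

Lemma hom_weight0 d x : hom d 0 x -> x = 0.
Proof. by case: graded => _ _ weight0 _ _; apply: weight0. Qed.

Lemma l_zero_arg (u v : seq V) : l (u ++ 0 :: v) = 0.
Proof.
case: ops => multilinear _ _; have := multilinear u v 1 0 0.
rewrite scaler0 addr0 scale1r => /(congr1 (fun z => z - l (u ++ 0 :: v))).
by rewrite subrr addrK.
Qed.

Variable S : V -> Prop.
Hypotheses (S0 : S 0) (S_lin : forall a x y, S x -> S y -> S (a *: x + y)).
Hypothesis S_l : forall xs, (0 < size xs)%N -> (forall x, x \in xs -> S x) -> S (l xs).

Lemma S_sum (I : eqType) (s : seq I) (F : I -> V) :
  (forall i, i \in s -> S (F i)) -> S (\sum_(i <- s) F i).
Proof.
move=> SF; rewrite big_seq; apply: big_ind => // x y Sx Sy.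
by rewrite -[x]scale1r; apply: S_lin.
Qed.

(* Words containing a letter of weight 0 contribute l_n(..., 0, ...) = 0, so
   only the letters of the words without such letters need to lie in S. *)
Lemma unary_part_coder2_closed (c : fsum V) : wf_fsum hom c ->
  (forall p, p \in c -> all (fun q => 0 < lwt q)%N p.2 ->
     forall r, r \in p.2 -> S (lvec r)) ->
  S (unary_part (coder l 2 c)).
Proof.
move=> wf_c S_letters; apply: S_sum => q /mem_coder2 [p [m [pc mm cm ->]]].
rewrite -[X in S X]addr0; apply: S_lin => //=.
case E: mask => [|//]; rewrite (mask_negb_nil (size_masks mm) E).
have [/hasP [r rp /eqP r0]|/hasPn p_pos] := boolP (has (fun q => lwt q == 0)%N p.2).
  have r_zero : lvec r = 0.
    by apply: (@hom_weight0 (ldeg r)); rewrite -r0; exact: (wf_c p pc r rp).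
  have : 0 \in map (@lvec V) p.2 by rewrite -r_zero map_f.
  by case/splitPr => p1 p2; rewrite l_zero_arg.
apply: S_l => [|_ /mapP [r rp ->]].
  rewrite size_map -(size_masks mm).
  by rewrite (leq_trans _ (count_size id m)) // (leq_trans _ cm).
by apply: (S_letters p pc _ r rp); apply/allP => r' /p_pos; rewrite lt0n.
Qed.

Hypothesis koszul_L : koszul hom l.

(* [s x] is a b-cycle because b = coder 2 needs at least two letters. *)
Lemma koszul_unary_resolution d w x : hom d w.+2 x ->
  exists c : fsum V, [/\ wf_fsum hom c,
    (forall p, p \in c -> word_weight p.2 = w%:Z) & x = unary_part (coder l 2 c)].
Proof.
move=> xw; set c : fsum V := [:: (1, [:: (d, w.+2, x)])].
have [|||c' [wf_c' wt_c' b_c']] := @koszul_L w.+1 isT c.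
- by move=> p; rewrite inE => /eqP -> r; rewrite inE => /eqP ->.
- by move=> p; rewrite inE => /eqP ->; rewrite /word_weight big_seq1 /lwt /=; lia.
- by exists [::].
exists c'; split=> // [p /wt_c' ->|]; first by lia.
have := unary_part_inR b_c'.
rewrite unary_part_cat unary_part_scale /unary_part big_seq1 /= scale1r scaleN1r.
by move/eqP; rewrite subr_eq0 => /eqP <-.
Qed.

Hypothesis S_weight1 : forall d x, hom d 1 x -> S x.

Lemma S_hom w d x : hom d w x -> S x.
Proof.
elim/ltn_ind: w d x => -[|[|w]] IHw d x xw.
- by rewrite (hom_weight0 xw).
- exact: S_weight1 xw.
have [c [wf_c wt_c ->]] := koszul_unary_resolution xw.
apply: unary_part_coder2_closed => // p pc p_pos r rp.
apply: (IHw (lwt r) _ (ldeg r)); last exact: (wf_c p pc r rp).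
by have := word_weight_ge_letter p_pos rp; rewrite wt_c; lia.
Qed.

End GeneratedInWeightOne.

Theorem proposition2p24 (V : lmodType rat) (hom : int -> nat -> V -> Prop)
  (l : seq V -> V) :
  Linfty_algebra hom l -> minimal l -> koszul hom l ->
  generated_in_weight_one hom l.
Proof.
move=> [graded ops _] _ koszul_L S S0 S_lin S_weight1 S_l x.
have [_ _ _ decompose _] := graded.
have [s [wf_s ->]] := decompose x.
apply: (S_sum S0 S_lin) => p ps.
exact: (S_hom graded ops S0 S_lin S_l koszul_L S_weight1 (wf_s p ps)).
Qed.
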